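(* Assume $\mathrm{char}\,K\neq 2$ and that $\mathcal H(D_n)$ and $\mathcal H(D_{n-1})$ are split over $K$. Then for every $\lambda\in\mathcal P_n$, $$\mathrm{soc}\bigl(\tilde D^{\lambda}\!\downarrow_{\mathcal H(D_{n-1})}\bigr)=\Bigl(\mathrm{soc}\bigl(\tilde D^{\lambda}\!\downarrow_{\mathcal H(B_{n-1})}\bigr)\Bigr)\!\downarrow_{\mathcal H(D_{n-1})}$$ as subspaces of $\tilde D^\lambda$.
   Context: Let $K$ be a field with $\mathrm{char}\,K\neq2$ and $q\in K^\times$. $\mathcal H(B_n)$ is the $K$-algebra with generators $T_0,\dots,T_{n-1}$ and relations $T_0^2=1$; $(T_i+1)(T_i-q)=0$ for $1\le i\le n-1$; $T_0T_1T_0T_1=T_1T_0T_1T_0$; $T_iT_{i+1}T_i=T_{i+1}T_iT_{i+1}$ for $1\le i\le n-2$; $T_iT_j=T_jT_i$ for $0\le i<j-1\le n-2$. $\mathcal H(D_n)$ is the subalgebra generated by $T_u:=T_0T_1T_0,T_1,\dots,T_{n-1}$ (a Hecke algebra of type $D_n$). $\mathcal H(B_{n-1})$ and $\mathcal H(D_{n-1})$ are the subalgebras defined in the same way using only generators with indices $\le n-2$. For each bipartition $\lambda$ of $n$, $\tilde S^\lambda$ is the Dipper–James–Mathas Specht module of $\mathcal H(B_n)$ and $\tilde D^\lambda$ is its quotient by the radical of its canonical bilinear form; $\mathcal P_n:=\{\lambda:\tilde D^\lambda\neq0\}$, and $\{\tilde D^\lambda:\lambda\in\mathcal P_n\}$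 is a complete set of pairwise non-isomorphic simple $\mathcal H(B_n)$-modules. $\mathrm{soc}$ denotes the socle and $\downarrow$ restriction. *)

(* Modules of the finitely presented Hecke algebras are
   encoded as matrix representations: a (finite-dimensional, right)
   H-module structure on K^d (row vectors, v . T_i := v *m t i) is exactly a
   family of d x d matrices satisfying the defining relations.
   Subspaces of K^d are represented by row spaces of square matrices. *)
From HB Require Import structures.
From mathcomp Require Import all_boot all_order all_algebra.
Set Implicit Arguments.
Unset Strict Implicit.
Unset Printing Implicit Defensive.
Import GRing.Theory.
Local Open Scope ring_scope.

Section Hecke.
Variables (K : fieldType) (q : K) (d : nat).

Definition HB_rel (n : nat) (t : nat -> 'M[K]_d) : Prop :=
  [/\ (0 < n)%N -> t 0%N *m t 0%N = 1%:M,
      forall i, (1 <= i < n)%N -> (t i + 1%:M) *m (t i - q%:M) = 0,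
      (2 <= n)%N -> t 0%N *m t 1%N *m t 0%N *m t 1%N = t 1%N *m t 0%N *m t 1%N *m t 0%N,
      forall i, (1 <= i)%N -> (i.+2 <= n)%N ->
        t i *m t i.+1 *m t i = t i.+1 *m t i *m t i.+1
    & forall i j, (i.+1 < j < n)%N -> t i *m t j = t j *m t i].

Definition Bgens (m : nat) (t : nat -> 'M[K]_d) : seq 'M[K]_d :=
  [seq t i | i <- iota 0 m].

(* Generators T_u := T_0 T_1 T_0, T_1, ..., T_{m-1} of the subalgebra
   H(D_m) of H(B_m), acting through t (H(D_m) = K when m <= 1). *)
Definition Dgens_in_B (m : nat) (t : nat -> 'M[K]_d) : seq 'M[K]_d :=
  if (2 <= m)%N then (t 0%N *m t 1%N *m t 0%N) :: [seq t i | i <- iota 1 m.-1]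
  else [::].

Definition HD_rel (m : nat) (u : 'M[K]_d) (t : nat -> 'M[K]_d) : Prop :=
  (2 <= m)%N ->
  [/\ (u + 1%:M) *m (u - q%:M) = 0,
      forall i, (1 <= i < m)%N -> (t i + 1%:M) *m (t i - q%:M) = 0,
      (u *m t 1%N = t 1%N *m u /\ ((3 <= m)%N -> u *m t 2%N *m u = t 2%N *m u *m t 2%N) /\
       (forall j, (3 <= j < m)%N -> u *m t j = t j *m u)),
      forall i, (1 <= i)%N -> (i.+2 <= m)%N ->
        t i *m t i.+1 *m t i = t i.+1 *m t i *m t i.+1
    & forall i j, (1 <= i)%N -> (i.+1 < j < m)%N -> t i *m t j = t j *m t i].

Definition Dgens (m : nat) (u : 'M[K]_d) (t : nat -> 'M[K]_d) : seq 'M[K]_d :=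
  if (2 <= m)%N then u :: [seq t i | i <- iota 1 m.-1] else [::].

Definition stable_under (gs : seq 'M[K]_d) (U : 'M[K]_d) : bool :=
  all (fun g => (U *m g <= U)%MS) gs.

Definition simple_sub (gs : seq 'M[K]_d) (U : 'M[K]_d) : Prop :=
  [/\ stable_under gs U, (0 < \rank U)%N &
      forall W : 'M[K]_d, stable_under gs W -> (W <= U)%MS ->
        \rank W = 0%N \/ (W == U)%MS].

Definition is_socle (gs : seq 'M[K]_d) (S : 'M[K]_d) : Prop :=
  [/\ forall U, simple_sub gs U -> (U <= S)%MS
    & exists Us : seq 'M[K]_d,
        (forall U, U \in Us -> simple_sub gs U) /\
        (S == \sum_(U <- Us) U)%MS].

End Hecke.

Definition HD_split (K : fieldType) (q : K) (m : nat) : Prop :=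
  forall (d : nat) (u : 'M[K]_d) (t : nat -> 'M[K]_d),
    HD_rel q m u t ->
    simple_sub (Dgens m u t) 1%:M ->
    forall X : 'M[K]_d,
      (forall g, g \in Dgens m u t -> g *m X = X *m g) ->
      exists c : K, X = c%:M.

(* Write D and B for the subalgebras generated by the D_{n-1} and B_{n-1}
   generators, and g = T_0.  Since g^2 = 1 and conjugation by g permutes the
   generators of D, the B-submodules are the g-stable D-submodules, and U g is
   D-simple whenever U is.  Hence a B-simple V lies in W + W g for a D-simple
   W.  Conversely, for a D-simple U the B-module U + U g is B-semisimple.
   Either it is B-simple, or the sum is direct; then the reflection 2 pi - 1,
   pi the projection onto U along U g, commutes with D and anticommutes with
   g, so it maps a proper B-submodule X to a B-submodule X', and X + X'
   contains X pi = U because 2 is invertible.  A rank count shows that X and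
   X' are B-simple.  So the D-socle and the B-socle are both the sum of all
   U + U g with U D-simple. *)
From HB Require Import structures.
From mathcomp Require Import all_boot all_order all_algebra zify.
From Stdlib Require Import Classical.
Set Implicit Arguments.
Unset Strict Implicit.
Unset Printing Implicit Defensive.
Import GRing.Theory.
Local Open Scope ring_scope.

Section Submodules.
Variables (K : fieldType) (d : nat).
Implicit Types (gs : seq 'M[K]_d) (U W X S : 'M[K]_d) (Us : seq 'M[K]_d).

Lemma stable_underP gs U :
  reflect (forall h, h \in gs -> (U *m h <= U)%MS) (stable_under gs U).
Proof. exact: allP. Qed.

Lemma stable_under_adds gs U W :
  stable_under gs U -> stable_under gs W -> stable_under gs (U + W)%MS.
Proof.
move=> /stable_underP sU /stable_underP sW; apply/stable_underP => h gs_h.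
by rewrite addsmxMr addsmxS ?sU ?sW.
Qed.

Lemma stable_under_cap gs U W :
  stable_under gs U -> stable_under gs W -> stable_under gs (U :&: W)%MS.
Proof.
move=> /stable_underP sU /stable_underP sW; apply/stable_underP => h gs_h.
rewrite sub_capmx (submx_trans _ (sU h gs_h)) ?(submx_trans _ (sW h gs_h)) //.
  by rewrite submxMr ?capmxSr.
by rewrite submxMr ?capmxSl.
Qed.

Lemma simple_sub_sup gs U X :
  simple_sub gs U -> stable_under gs X -> (X <= U)%MS -> (0 < \rank X)%N ->
  (U <= X)%MS.
Proof.
case=> _ _ minU sX sXU; rewrite lt0n; case: (minU X sX sXU) => [->//|].
by case/andP.
Qed.

Lemma simple_sub_cap gs U X :
  simple_sub gs U -> stable_under gs X -> (U :&: X)%MS = 0 \/ (U <= X)%MS.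
Proof.
move=> simU sX; have [sU _ _] := simU.
have [/eqP|] := eqVneq (\rank (U :&: X)%MS) 0%N.
  by rewrite mxrank_eq0 => /eqP; left.
rewrite -lt0n => rUX; right.
apply: submx_trans (capmxSr U X).
exact: simple_sub_sup (stable_under_cap sU sX) (capmxSl U X) rUX.
Qed.

Lemma simple_sub_exists gs X :
  stable_under gs X -> (0 < \rank X)%N ->
  exists2 U, simple_sub gs U & (U <= X)%MS.
Proof.
elim: {X}(\rank X).+1 {-2}X (ltnSn (\rank X)) => // N IHN X ltXN sX rX.
have [[W [sW sWX rW nWX]]|minX] := classic (exists W,
   [/\ stable_under gs W, (W <= X)%MS, \rank W != 0%N & ~~ (W == X)%MS]).
  have ltWX : (\rank W < \rank X)%N.
    by rewrite ltn_neqAle (mxrank_leqif_eq sWX) nWX mxrankS.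
  have [|||U simU sUW] := IHN W; rewrite ?lt0n //.
    exact: leq_trans ltWX ltXN.
  by exists U; last exact: submx_trans sWX.
exists X => //; split=> // W sW sWX.
have [|rW] := eqVneq (\rank W) 0%N; first by left.
by have [|nWX] := boolP (W == X)%MS; [right | case: minX; exists W].
Qed.

Lemma sumsmx_seq_sub Us S :
  (forall U, U \in Us -> (U <= S)%MS) -> (\sum_(U <- Us) U <= S)%MS.
Proof.
move=> sUsS; rewrite big_seq; elim/big_rec: _ => [|U X Us_U sXS].
  exact: sub0mx.
by rewrite addsmx_sub sUsS.
Qed.

Definition covered_by_simples gs X :=
  exists2 Us, (forall U, U \in Us -> simple_sub gs U) &
              (X <= \sum_(U <- Us) U)%MS.

Lemma covered_simple gs U : simple_sub gs U -> covered_by_simples gs U.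
Proof.
by move=> simU; exists [:: U] => [W|]; rewrite ?inE ?big_seq1 // => /eqP->.
Qed.

Lemma covered_sub gs X W :
  (W <= X)%MS -> covered_by_simples gs X -> covered_by_simples gs W.
Proof.
by move=> sWX [Us simUs sXUs]; exists Us => //; apply: submx_trans sXUs.
Qed.

Lemma covered_adds gs X W :
  covered_by_simples gs X -> covered_by_simples gs W ->
  covered_by_simples gs (X + W)%MS.
Proof.
move=> [Us simUs sXUs] [Ws simWs sWWs]; exists (Us ++ Ws).
  by move=> U; rewrite mem_cat => /orP[/simUs|/simWs].
by rewrite big_cat addsmxS.
Qed.

Lemma covered_sumsmx gs Us :
  (forall U, U \in Us -> covered_by_simples gs U) ->
  covered_by_simples gs (\sum_(U <- Us) U)%MS.
Proof.
move=> covUs; rewrite big_seq; elim/big_rec: _ => [|U X Us_U covX].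
  by exists [::]; rewrite ?big_nil.
exact: covered_adds (covUs U Us_U) covX.
Qed.

Lemma covered_sub_socle gs X S :
  (forall U, simple_sub gs U -> (U <= S)%MS) ->
  covered_by_simples gs X -> (X <= S)%MS.
Proof.
move=> sSimS [Us simUs sXUs]; apply: submx_trans sXUs _.
by apply: sumsmx_seq_sub => U /simUs /sSimS.
Qed.

Lemma is_socle_transfer gs hs S :
  (forall U, simple_sub gs U -> covered_by_simples hs U) ->
  (forall V, simple_sub hs V -> covered_by_simples gs V) ->
  is_socle gs S -> is_socle hs S.
Proof.
move=> cov_gs cov_hs [sSimS [Us [simUs /andP[sSUs _]]]].
have sSimS_hs V : simple_sub hs V -> (V <= S)%MS.
  by move/cov_hs; apply: covered_sub_socle.
split=> //.
have [Vs simVs sSVs] : covered_by_simples hs S.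
  by apply: covered_sub sSUs _; apply: covered_sumsmx => U /simUs /cov_gs.
exists Vs; split=> //; rewrite sSVs /=.
by apply: sumsmx_seq_sub => V /simVs /sSimS_hs.
Qed.

End Submodules.

Lemma proj_mx_stable_mulmx (K : fieldType) d (U W X h : 'M[K]_d) :
  (U :&: W)%MS = 0 -> stablemx U h -> stablemx W h -> (X <= U + W)%MS ->
  X *m proj_mx U W *m h = X *m h *m proj_mx U W.
Proof.
move=> dxUW sUh sWh sXUW.
have sXpU : (X *m proj_mx U W *m h <= U)%MS.
  by apply: submx_trans sUh; rewrite submxMr ?proj_mx_sub.
have sXpW : ((X - X *m proj_mx U W) *m h <= W)%MS.
  by apply: submx_trans sWh; rewrite submxMr ?proj_mx_compl_sub.
have -> : X *m h = (X - X *m proj_mx U W) *m h + X *m proj_mx U W *m h.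
  by rewrite -mulmxDl subrK.
by rewrite mulmxDl (proj_mx_0 dxUW sXpW) (proj_mx_id dxUW sXpU) add0r.
Qed.

Section IndexTwo.
Variables (K : fieldType) (d : nat) (gs hs : seq 'M[K]_d) (g : 'M[K]_d).
Hypothesis g_invol : g *m g = 1%:M.
Hypothesis gs_conj : forall h, h \in gs -> g *m h *m g \in gs.
Hypothesis stable_hs :
  forall W, stable_under hs W = stable_under gs W && (W *m g <= W)%MS.
Implicit Types (U V W X Y : 'M[K]_d).

Lemma mulmx_involK U : U *m g *m g = U.
Proof. by rewrite -mulmxA g_invol mulmx1. Qed.

Lemma mxrank_invol U : \rank (U *m g) = \rank U.
Proof.
by apply/eqP; rewrite eqn_leq mxrankM_maxl -{1}(mulmx_involK U) mxrankM_maxl.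
Qed.

Lemma stable_hs_gs X : stable_under hs X -> stable_under gs X.
Proof. by rewrite stable_hs => /andP[]. Qed.

Lemma stable_hs_invol X : stable_under hs X -> (X *m g <= X)%MS.
Proof. by rewrite stable_hs => /andP[]. Qed.

Lemma stable_under_invol U : stable_under gs U -> stable_under gs (U *m g).
Proof.
move/stable_underP=> sU; apply/stable_underP => h gs_h.
have -> : U *m g *m h = U *m (g *m h *m g) *m g by rewrite !mulmxA mulmx_involK.
by rewrite submxMr ?sU ?gs_conj.
Qed.

Lemma simple_sub_invol U : simple_sub gs U -> simple_sub gs (U *m g).
Proof.
move=> [sU rU minU]; split; rewrite ?stable_under_invol ?mxrank_invol //.
move=> W sW sWUg; have sWgU : (W *m g <= U)%MS.
  by rewrite -(mulmx_involK U) submxMr.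
case: (minU _ (stable_under_invol sW) sWgU) => [|/andP[_ sUWg]].
  by rewrite mxrank_invol; left.
by right; rewrite sWUg -(mulmx_involK W) submxMr.
Qed.

Lemma stable_hs_orbit U : stable_under gs U -> stable_under hs (U + U *m g)%MS.
Proof.
move=> sU; rewrite stable_hs stable_under_adds ?stable_under_invol //=.
by rewrite addsmxMr mulmx_involK addsmx_sub addsmxSl addsmxSr.
Qed.

Lemma simple_hs_sub_orbit V :
  simple_sub hs V -> exists2 W, simple_sub gs W & (V <= W + W *m g)%MS.
Proof.
move=> simV; have [sV rV _] := simV.
have [W simW sWV] := simple_sub_exists (stable_hs_gs sV) rV.
have [sW rW _] := simW.
exists W => //; apply: simple_sub_sup simV (stable_hs_orbit sW) _ _.
  by rewrite addsmx_sub sWV (submx_trans (submxMr g sWV)) ?stable_hs_invol.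
exact: leq_trans rW (mxrankS (addsmxSl _ _)).
Qed.

Lemma covered_simple_hs V : simple_sub hs V -> covered_by_simples gs V.
Proof.
case/simple_hs_sub_orbit=> W simW sVW; apply: covered_sub sVW _.
have simWg := simple_sub_invol simW.
exact: covered_adds (covered_simple simW) (covered_simple simWg).
Qed.

Section Orbit.
Hypothesis two_neq0 : (2%:R : K) != 0.
Variable U : 'M[K]_d.
Hypothesis simU : simple_sub gs U.
Local Notation V := (U + U *m g)%MS.

Lemma orbit_disjoint X :
  stable_under hs X -> (X <= V)%MS -> (0 < \rank X)%N -> ~~ (V <= X)%MS ->
  (U :&: U *m g)%MS = 0.
Proof.
have [sU _ _] := simU.
case: (simple_sub_cap simU (stable_under_invol sU)) => // sUUg.
have sUgU : (U *m g <= U)%MS.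
  by rewrite -(mxrank_leqif_sup sUUg).2 mxrank_invol.
move=> sX sXV rX /negP[]; have sXU : (X <= U)%MS.
  by apply: submx_trans sXV _; rewrite addsmx_sub submx_refl.
apply: submx_trans (simple_sub_sup simU (stable_hs_gs sX) sXU rX).
by rewrite addsmx_sub submx_refl.
Qed.

Section Disjoint.
Hypothesis dxU : (U :&: U *m g)%MS = 0.
Local Notation pi := (proj_mx U (U *m g)).
Local Notation refl := (2%:R *: pi - 1%:M).

Lemma mxrank_orbit : \rank V = (\rank U + \rank U)%N.
Proof. by rewrite mxrank_disjoint_sum // mxrank_invol. Qed.

Lemma proj_orbit_mulmx Y h :
  (Y <= V)%MS -> h \in gs -> Y *m pi *m h = Y *m h *m pi.
Proof.
move=> sYV gs_h; have [sU _ _] := simU.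
apply: (proj_mx_stable_mulmx dxU _ _ sYV).
  by move/stable_underP: sU; apply.
by move/stable_underP: (stable_under_invol sU); apply.
Qed.

Lemma proj_orbit_invol Y : (Y <= V)%MS -> Y *m g *m pi = (Y - Y *m pi) *m g.
Proof.
move=> sYV; have sYUg : (Y *m pi *m g <= U *m g)%MS.
  by rewrite submxMr ?proj_mx_sub.
have sYU : ((Y - Y *m pi) *m g <= U)%MS.
  by have := submxMr g (proj_mx_compl_sub sYV); rewrite mulmx_involK.
have -> : Y *m g = Y *m pi *m g + (Y - Y *m pi) *m g.
  by rewrite -mulmxDl addrC subrK.
by rewrite mulmxDl (proj_mx_0 dxU sYUg) (proj_mx_id dxU sYU) add0r.
Qed.

Lemma mulmx_refl Y : Y *m refl = 2%:R *: (Y *m pi) - Y.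
Proof. by rewrite mulmxBr mulmx1 -scalemxAr. Qed.

Lemma refl_mulmx Y h :
  (Y <= V)%MS -> h \in gs -> Y *m refl *m h = Y *m h *m refl.
Proof.
by move=> sYV gs_h; rewrite !mulmx_refl mulmxBl -scalemxAl proj_orbit_mulmx.
Qed.

Lemma refl_invol Y : (Y <= V)%MS -> Y *m refl *m g = - (Y *m g *m refl).
Proof.
move=> sYV; rewrite !mulmx_refl proj_orbit_invol // mulmxBl -!scalemxAl.
rewrite mulmxBl scalerBr; set a := 2%:R *: (Y *m pi *m g); set b := Y *m g.
by rewrite scaler_nat mulr2n addrAC addrK opprB.
Qed.

Lemma stable_hs_refl X :
  stable_under hs X -> (X <= V)%MS -> stable_under hs (X *m refl).
Proof.
move=> sX sXV; rewrite stable_hs; apply/andP; split.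
  apply/stable_underP => h gs_h; rewrite refl_mulmx // submxMr //.
  by move/stable_underP: (stable_hs_gs sX); apply.
by rewrite refl_invol // eqmx_opp submxMr ?stable_hs_invol.
Qed.

Lemma refl_sub_orbit Y : (Y <= V)%MS -> (Y *m refl <= V)%MS.
Proof.
move=> sYV; rewrite mulmx_refl addmx_sub ?eqmx_opp ?scalemx_sub //.
exact: submx_trans (proj_mx_sub _ _ _) (addsmxSl _ _).
Qed.

Section ProperSubmodule.
Variable X : 'M[K]_d.
Hypotheses (sX : stable_under hs X) (sXV : (X <= V)%MS).
Hypotheses (rX : (0 < \rank X)%N) (nsVX : ~~ (V <= X)%MS).

Lemma proper_orbit_disjoint : (U :&: X)%MS = 0 /\ (U *m g :&: X)%MS = 0.
Proof.
have sXgs := stable_hs_gs sX; have sXgX := stable_hs_invol sX.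
have sUX_UgX : (U <= X)%MS = (U *m g <= X)%MS.
  apply/idP/idP => [sUX | sUgX]; apply: submx_trans sXgX.
    exact: submxMr.
  by rewrite -[U in (U <= _)%MS]mulmx_involK submxMr.
have nsUX : ~~ (U <= X)%MS.
  by apply: contra nsVX => sUX; rewrite addsmx_sub -sUX_UgX sUX.
split.
  by case: (simple_sub_cap simU sXgs) => // sUX; rewrite sUX in nsUX.
case: (simple_sub_cap (simple_sub_invol simU) sXgs) => // sUgX.
by rewrite sUX_UgX sUgX in nsUX.
Qed.

Lemma proper_orbit_proj : (U <= X *m pi)%MS.
Proof.
have [_ dxUgX] := proper_orbit_disjoint.
apply: simple_sub_sup simU _ (proj_mx_sub _ _ _) _.
  apply/stable_underP => h gs_h; rewrite proj_orbit_mulmx // submxMr //.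
  by move/stable_underP: (stable_hs_gs sX); apply.
rewrite lt0n mxrank_eq0; apply: contraTneq rX => Xpi0.
have sXUg : (X <= U *m g)%MS.
  by have := proj_mx_compl_sub sXV; rewrite Xpi0 subr0.
have : (X <= U *m g :&: X)%MS by rewrite sub_capmx sXUg submx_refl.
by rewrite dxUgX submx0 -mxrank_eq0 => /eqP->.
Qed.

Lemma proper_orbit_rank : \rank X = \rank U.
Proof.
have [dxUX _] := proper_orbit_disjoint.
apply/eqP; rewrite eqn_leq; apply/andP; split.
  rewrite -(leq_add2l (\rank U)) -mxrank_disjoint_sum // -mxrank_orbit.
  by rewrite mxrankS // addsmx_sub addsmxSl.
exact: leq_trans (mxrankS proper_orbit_proj) (mxrankM_maxl _ _).
Qed.

Lemma orbit_sub_refl : (V <= X + X *m refl)%MS.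
Proof.
have sXXr : stable_under hs (X + X *m refl)%MS.
  by rewrite stable_under_adds ?stable_hs_refl.
have sUXXr : (U <= X + X *m refl)%MS.
  apply: submx_trans proper_orbit_proj _.
  have -> : X *m pi = 2%:R^-1 *: (X + X *m refl).
    by rewrite mulmx_refl addrC subrK scalerA mulVf // scale1r.
  by rewrite scalemx_sub // addmx_sub_adds.
rewrite addsmx_sub sUXXr /=.
exact: submx_trans (submxMr g sUXXr) (stable_hs_invol sXXr).
Qed.

End ProperSubmodule.

Lemma proper_orbit_simple X :
  stable_under hs X -> (X <= V)%MS -> (0 < \rank X)%N -> ~~ (V <= X)%MS ->
  simple_sub hs X.
Proof.
move=> sX sXV rX nsVX; split=> // Y sY sYX.
have [|rY] := eqVneq (\rank Y) 0%N; [by left | right].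
have sYV : (Y <= V)%MS by apply: submx_trans sXV.
have nsVY : ~~ (V <= Y)%MS by apply: contra nsVX => /submx_trans->.
rewrite -(mxrank_leqif_eq sYX).2 (proper_orbit_rank sX sXV rX nsVX).
by rewrite (proper_orbit_rank sY sYV _ nsVY) ?lt0n.
Qed.

Lemma covered_orbit_disjoint X :
  stable_under hs X -> (X <= V)%MS -> (0 < \rank X)%N -> ~~ (V <= X)%MS ->
  covered_by_simples hs V.
Proof.
move=> sX sXV rX nsVX.
have sVX := orbit_sub_refl sX sXV rX nsVX.
have rXr : (\rank (X *m refl) <= \rank U)%N.
  by rewrite -(proper_orbit_rank sX sXV rX nsVX) mxrankM_maxl.
have rV : (\rank V <= \rank X + \rank (X *m refl))%N.
  exact: leq_trans (mxrankS sVX) (mxrank_adds_leqif _ _).1.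
have [_ rU _] := simU.
move: rV; rewrite mxrank_orbit (proper_orbit_rank sX sXV rX nsVX) => rV.
exists [:: X; X *m refl]; last by rewrite big_cons big_seq1.
move=> W; rewrite !inE => /orP[] /eqP->; first exact: proper_orbit_simple.
apply: proper_orbit_simple; rewrite ?stable_hs_refl ?refl_sub_orbit //.
  by lia.
apply/negP => /mxrankS; rewrite mxrank_orbit; lia.
Qed.

End Disjoint.

Lemma covered_orbit : covered_by_simples hs V.
Proof.
have [sU rU _] := simU.
have rV : (0 < \rank V)%N by apply: leq_trans rU (mxrankS (addsmxSl _ _)).
have [W simW sWV] := simple_sub_exists (stable_hs_orbit sU) rV.
have [sVW|nsVW] := boolP (V <= W)%MS.
  exact: covered_sub sVW (covered_simple simW).
have [sW rW _] := simW.
exact: (covered_orbit_disjoint (orbit_disjoint sW sWV rW nsVW) sW sWV rW nsVW).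
Qed.

End Orbit.

Lemma covered_simple_gs (two_neq0 : (2%:R : K) != 0) U :
  simple_sub gs U -> covered_by_simples hs U.
Proof.
by move=> simU; apply: covered_sub (covered_orbit two_neq0 simU); apply: addsmxSl.
Qed.

Lemma is_socle_index2 S :
  (2%:R : K) != 0 -> is_socle gs S <-> is_socle hs S.
Proof.
move=> two_neq0; split; apply: is_socle_transfer.
- exact: (covered_simple_gs two_neq0).
- exact: covered_simple_hs.
- exact: covered_simple_hs.
- exact: (covered_simple_gs two_neq0).
Qed.

End IndexTwo.

Section TypeBGenerators.
Variables (K : fieldType) (d : nat) (t : nat -> 'M[K]_d).

Lemma Dgens_in_B_conj m :
  t 0%N *m t 0%N = 1%:M ->
  (forall j, (2 <= j <= m)%N -> t 0%N *m t j = t j *m t 0%N) ->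
  forall h, h \in Dgens_in_B m t -> t 0%N *m h *m t 0%N \in Dgens_in_B m t.
Proof.
move=> t00 t0_comm h; rewrite /Dgens_in_B; case: ifP => // m_ge2.
have mK : (1 + m.-1)%N = m by lia.
have t1_in : t 1%N \in [seq t i | i <- iota 1 m.-1].
  by rewrite map_f // mem_iota mK leqnn /=; lia.
rewrite inE => /orP[/eqP->|/mapP[i]].
  by rewrite !mulmxA t00 mul1mx -mulmxA t00 mulmx1 inE t1_in orbT.
rewrite mem_iota mK => /andP[i_ge1 i_lt] ->.
have [i_gt1|i_le1] := ltnP 1 i; last first.
  have -> : i = 1%N by lia.
  by rewrite inE eqxx.
rewrite t0_comm; last by lia.
rewrite -mulmxA t00 mulmx1 inE.
by rewrite map_f ?orbT // mem_iota i_ge1 mK.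
Qed.

Lemma stable_Bgens m W :
  (1 <= m)%N ->
  stable_under (Bgens m t) W =
    stable_under (Dgens_in_B m t) W && (W *m t 0%N <= W)%MS.
Proof.
case: m => [//|[|m]] _; rewrite /stable_under /Bgens /Dgens_in_B /=.
  by rewrite andbT.
case: (boolP (W *m t 0%N <= W)%MS) => [sWt0|_]; last by rewrite !andbF.
case: (boolP (W *m t 1%N <= W)%MS) => [sWt1|_]; last by rewrite !andbF.
have sWt010 : stablemx W (t 0%N *m t 1%N *m t 0%N).
  rewrite !mulmxA (submx_trans _ sWt0) // submxMr //.
  by rewrite (submx_trans _ sWt1) // submxMr.
by rewrite sWt010 andbT.
Qed.

End TypeBGenerators.

Unset Implicit Arguments.
Set Strict Implicit.

Theorem mainTheorem2 (K : fieldType) (q : K) (n : nat) :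
  ~~ (2 \in [pchar K])%N -> q != 0 -> (1 <= n)%N ->
  HD_split q n -> HD_split q n.-1 ->
  forall (d : nat) (t : nat -> 'M[K]_d),
    HB_rel q n t ->
    simple_sub (Bgens n t) 1%:M ->
    forall S : 'M[K]_d,
      is_socle (Dgens_in_B n.-1 t) S <-> is_socle (Bgens n.-1 t) S.
Proof.
move=> char_neq2 _ n_gt0 _ _ d t [t00 _ _ _ t_comm] _ S.
have two_neq0 : (2%:R : K) != 0 by move: char_neq2; rewrite inE.
have {}t00 : t 0%N *m t 0%N = 1%:M := t00 n_gt0.
case: n n_gt0 t_comm => [//|[//|m]] _ t_comm.
apply: (is_socle_index2 (g := t 0%N)) => //.
  apply: Dgens_in_B_conj => // j /andP[j_ge2 j_le]; apply: t_comm.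
  by rewrite j_ge2 ltnS.
by move=> W; apply: stable_Bgens.
Qed.
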